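(* Let $\ell\ge 1$, $c\ge 1$ and $s\ge 1$ be integers, and let $\underline{\eta}=(\eta_1,\dots,\eta_s)$ be integer thresholds with $1\le \eta_1<\eta_2<\dots<\eta_s\le \ell$. For $x\in\{0,\dots,\ell\}$ let $o(x)=0^{\ell-x}1^{x}$ and $u(x)=1^{x}0^{\ell-x}$ (words of length $\ell$), and for a word $w$ let $w^{c}$ denote the concatenation of $c$ copies of $w$. Define the binary word $$p(c)=o(0)^{c}\;\,0\,o(\eta_1)^{c}\;\,0\,o(\eta_2)^{c}\cdots 0\,o(\eta_s)^{c}\;\,1\,u(\ell)^{c}\;\,1\,u(\eta_s-1)^{c}\;\,1\,u(\eta_{s-1}-1)^{c}\cdots 1\,u(\eta_1-1)^{c}\;\,0,$$ which has length $(2s+2)(c\ell+1)$, and let $v=(v_t)_{t\ge 0}$ be the infinite periodic binary sequence $p(c)p(c)p(c)\cdots$. Let $q=(q_0,\dots,q_{2s+1})=(0,1,\dots,s,s,s-1,\dots,1,0)$. Then for every integer $i\ge 0$, $$\underline{\eta}\Big(\sum_{t=i}^{i+\ell-1} v_t\Big)=q_{\lfloor i/(c\ell+1)\rfloor \bmod (2s+2)}.$$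
   Context: For thresholds $\underline{\eta}=(\eta_1<\dots<\eta_s)$ (positive integers), the SQGT outcome of a nonnegative integer $y$ is $\underline{\eta}(y)=|\{k\in\{1,\dots,s\}:\eta_k\le y\}|\in\{0,\dots,s\}$. The sum $\sum_{t=i}^{i+\ell-1}v_t$ is the inner product of the test $v$ with the length-$\ell$ burst (consecutive block of ones) occupying positions $i,\dots,i+\ell-1$. *)

From mathcomp Require Import all_boot.
Set Implicit Arguments. Unset Strict Implicit. Unset Printing Implicit Defensive.

(* Thresholds are given as a function eta : nat -> nat, indexed 1..s. *)
Definition sqgt (s : nat) (eta : nat -> nat) (y : nat) : nat :=
  count (fun k => eta k <= y) (iota 1 s).

(* Words are seq nat over {0,1}. *)
Definition oword (ell x : nat) : seq nat := nseq (ell - x) 0 ++ nseq x 1.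
Definition uword (ell x : nat) : seq nat := nseq x 1 ++ nseq (ell - x) 0.
Definition wpow (c : nat) (w : seq nat) : seq nat := flatten (nseq c w).

Definition pword (ell c s : nat) (eta : nat -> nat) : seq nat :=
  wpow c (oword ell 0)
  ++ flatten [seq 0 :: wpow c (oword ell (eta k)) | k <- iota 1 s]
  ++ (1 :: wpow c (uword ell ell))
  ++ flatten [seq 1 :: wpow c (uword ell (eta k - 1)) | k <- rev (iota 1 s)]
  ++ [:: 0].

Definition vseq (ell c s : nat) (eta : nat -> nat) (t : nat) : nat :=
  let p := pword ell c s eta in nth 0 p (t %% size p).

Definition qseq (s j : nat) : nat := if j <= s then j else (2 * s + 1 - j).

(* Let m = c * ell + 1 and N = 2s + 2.  The word p(c) is the concatenation of
   N blocks of length m: block J is W_J repeated c times followed by one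
   separator bit sep_J, where W_J = o(eta_J) for J <= s (with eta_0 := 0),
   W_(s+1) = u(ell), W_J = u(eta_(2s+2-J) - 1) for J > s+1, and sep_J = 1
   exactly when s <= J <= 2s.  Writing i mod |p(c)| = J * m + r with r < m
   (so J = floor(i/m) mod N), the window of length ell starting at i either
   - lies inside the c copies of W_J: it is a rotation of W_J and its weight
     is the weight of W_J; or
   - straddles the separator: it reads a suffix of W_J, sep_J and a prefix of
     W_(J+1) (indices mod N).
   In both cases the weight y satisfies eta_(q_J) <= y < eta_(q_J + 1), which
   is exactly the band on which the SQGT outcome equals q_J. *)

From mathcomp Require Import all_boot zify.

Set Implicit Arguments.
Unset Strict Implicit.
Unset Printing Implicit Defensive.

(* Unconditional forms of [drop_cat] and [take_cat], using truncated
   subtraction instead of a case split. *)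
Lemma drop_cat_sub (T : Type) n (s1 s2 : seq T) :
  drop n (s1 ++ s2) = drop n s1 ++ drop (n - size s1) s2.
Proof.
rewrite drop_cat; case: ltnP => h; last by rewrite (drop_oversize h).
by rewrite (_ : n - size s1 = 0) ?drop0 //; lia.
Qed.

Lemma take_cat_sub (T : Type) n (s1 s2 : seq T) :
  take n (s1 ++ s2) = take n s1 ++ take (n - size s1) s2.
Proof.
rewrite take_cat; case: ltnP => h; last by rewrite (take_oversize h).
by rewrite (_ : n - size s1 = 0) ?take0 ?cats0 //; lia.
Qed.

Lemma take_nseq_min (T : Type) n m (x : T) :
  take n (nseq m x) = nseq (minn n m) x.
Proof.
case: (leqP n m) => h; first by rewrite take_nseq // (minn_idPl h).
by rewrite take_oversize ?size_nseq ?(minn_idPr (ltnW h)) // ltnW.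
Qed.

Lemma sum_periodic_window (P : seq nat) (ell i : nat) :
  0 < size P -> ell <= size P ->
  \sum_(i <= t < i + ell) nth 0 P (t %% size P)
  = sumn (take ell (drop (i %% size P) (P ++ P))).
Proof.
move=> hP hl; set L := size P; set d := i %% L.
have hd : d < L by apply: ltn_pmod.
rewrite -(map_nth_iota 0); last by rewrite size_cat; lia.
rewrite sumnE big_map -{1}[i]add0n big_addn addKn.
rewrite -[d in iota d]addn0 iotaDl big_map /index_iota subn0.
apply: eq_big_seq => k; rewrite mem_iota => /andP[_ hk] /=.
have -> : (k + i) %% L = (d + k) %% L by rewrite /d modnDml addnC.
rewrite nth_cat -/L; case: ltnP => h; first by rewrite modn_small.
by congr nth; rewrite -{1}(subnK h) modnDr modn_small //; lia.
Qed.

Lemma modn_mul_split i m N : i %% (N * m) = (i %/ m %% N) * m + i %% m.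
Proof. by rewrite modn_divl -(modn_dvdm i (dvdn_mull N (dvdnn m))) -divn_eq. Qed.

Section EqualBlocks.
Variables (T : Type) (B : nat -> seq T) (m : nat).

Lemma size_flatten_blocks n a :
  (forall k, a <= k < a + n -> size (B k) = m) ->
  size (flatten [seq B k | k <- iota a n]) = n * m.
Proof.
elim: n a => [|n IH] a hB //=.
by rewrite size_cat hB ?IH ?mulSn // => [k hk|]; [apply: hB|]; lia.
Qed.

Lemma drop_flatten_blocks (Y : seq T) J n a :
  (forall k, a <= k < a + n -> size (B k) = m) -> J <= n ->
  drop (J * m) (flatten [seq B k | k <- iota a n] ++ Y)
  = flatten [seq B k | k <- iota (a + J) (n - J)] ++ Y.
Proof.
elim: J n a => [|J IH] [|n] a hB hJ //=; rewrite ?addn0 ?drop0 //.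
rewrite -catA drop_cat_sub drop_oversize; last by rewrite hB ?mulSn; lia.
rewrite hB; last by lia.
rewrite mulSn addKn IH ?addSnnS // => k hk; apply: hB; lia.
Qed.

End EqualBlocks.

Lemma size_wpow c (W : seq nat) : size (wpow c W) = c * size W.
Proof. by elim: c => //= c IH; rewrite size_cat IH mulSn. Qed.

Lemma wpowS c (W : seq nat) : wpow c.+1 W = W ++ wpow c W.
Proof. by []. Qed.

Lemma drop_wpow q c (W : seq nat) :
  drop (q * size W) (wpow c W) = wpow (c - q) W.
Proof.
elim: q c => [|q IH] [|c] //=; rewrite ?drop0 // drop_cat_sub.
by rewrite drop_oversize ?mulSn ?leq_addr // addKn IH.
Qed.

(* A length-|W| window starting at offset r of W, continued by a sequence
   that begins like W, is a rotation of W and has the same weight. *)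
Lemma sumn_rotation (W Y : seq nat) r : r <= size W -> take r Y = take r W ->
  sumn (take (size W) (drop r W ++ Y)) = sumn W.
Proof.
move=> hr hY; rewrite take_cat_sub take_oversize ?size_drop ?leq_subr //.
by rewrite subKn // hY sumn_cat addnC -sumn_cat cat_take_drop.
Qed.

Lemma sumn_window_wpow ell c (W Y : seq nat) n : size W = ell ->
  n + ell <= c * ell -> sumn (take ell (drop n (wpow c W ++ Y))) = sumn W.
Proof.
move=> <- hn; have [/size0nil -> | hW] := posnP (size W); first by rewrite !take0.
set L := size W in hn hW *; set q := n %/ L; set r := n %% L.
have hnqr : n = q * L + r := divn_eq n L.
have hr : r < L by rewrite ltn_mod.
have hq : q < c by rewrite -(ltn_pmul2r hW); lia.
have [k hk] : exists k, c - q = k.+1 by exists (c - q).-1; lia.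
rewrite hnqr addnC -drop_drop drop_cat_sub size_wpow.
rewrite (_ : q * L - c * L = 0) ?drop0; last by lia.
rewrite drop_wpow hk wpowS -catA drop_cat_sub (_ : r - L = 0) ?drop0; last by lia.
apply: sumn_rotation; first exact: ltnW.
have [-> | hr0] := posnP r; first by rewrite !take0.
(* a window starting strictly inside a copy of W needs one more full copy *)
have : q.+1 * L < c * L by rewrite mulSn; lia.
rewrite ltn_pmul2r //; case: k hk => [|k] hk hqc; first by lia.
by rewrite wpowS -catA takel_cat // ltnW.
Qed.

(* Weight of a window reading the suffix of W from offset r, a separator
   bit b, and the prefix of W' of length r - 1. *)
Definition straddle (W : seq nat) (b : nat) (W' : seq nat) (r : nat) : nat :=
  sumn (drop r W) + b + sumn (take r.-1 W').

Lemma sumn_window_straddle ell c (W W' Z : seq nat) b n : size W = ell ->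
  0 < c -> n <= c * ell < n + ell -> n + ell - c * ell <= (size W').+1 ->
  sumn (take ell (drop n (wpow c W ++ b :: wpow c W' ++ Z)))
  = straddle W b W' (n + ell - c * ell).
Proof.
move=> <-; case: c => [|c] // _; rewrite mulSn => hn hW'.
have [r hr hnr] : exists2 r, 0 < r <= size W & n = r + c * size W.
  by exists (n + size W - (size W + c * size W)); lia.
subst n.
rewrite (_ : r + c * size W + size W - (size W + c * size W) = r) in hW' *; last by lia.
rewrite -drop_drop drop_cat_sub drop_wpow size_wpow subSnn wpowS -catA.
rewrite (_ : c * size W - (size W + c * size W) = 0) ?drop0; last by lia.
rewrite drop_cat_sub (_ : r - size W = 0) ?drop0; last by lia.
rewrite take_cat_sub take_oversize ?size_drop ?leq_subr //.
rewrite (_ : size W - (size W - r) = r.-1.+1) /=; last by lia.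
rewrite wpowS -catA takel_cat; last by lia.
by rewrite sumn_cat /= /straddle addnA.
Qed.

Lemma size_oword ell x : x <= ell -> size (oword ell x) = ell.
Proof. by move=> h; rewrite /oword size_cat !size_nseq subnK. Qed.

Lemma size_uword ell x : x <= ell -> size (uword ell x) = ell.
Proof. by move=> h; rewrite /uword size_cat !size_nseq addnC subnK. Qed.

Lemma sumn_drop_oword ell x n : x <= ell ->
  sumn (drop n (oword ell x)) = x - (n - (ell - x)).
Proof.
move=> hx; rewrite /oword drop_cat_sub !drop_nseq size_nseq sumn_cat.
by rewrite !sumn_nseq mul1n.
Qed.

Lemma sumn_take_oword ell x n : x <= ell ->
  sumn (take n (oword ell x)) = minn n ell - (ell - x).
Proof.
move=> hx; rewrite /oword take_cat_sub !take_nseq_min size_nseq sumn_cat.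
rewrite !sumn_nseq mul1n; lia.
Qed.

Lemma sumn_drop_uword ell x n : sumn (drop n (uword ell x)) = x - n.
Proof.
rewrite /uword drop_cat_sub !drop_nseq size_nseq sumn_cat.
by rewrite !sumn_nseq mul1n addn0.
Qed.

Lemma sumn_take_uword ell x n : sumn (take n (uword ell x)) = minn n x.
Proof.
rewrite /uword take_cat_sub !take_nseq_min size_nseq sumn_cat.
rewrite !sumn_nseq mul1n; lia.
Qed.

Lemma sumn_oword ell x : x <= ell -> sumn (oword ell x) = x.
Proof. by move=> hx; rewrite -[oword _ _]drop0 sumn_drop_oword // sub0n subn0. Qed.

Lemma sumn_uword ell x : sumn (uword ell x) = x.
Proof. by rewrite -[uword _ _]drop0 sumn_drop_uword subn0. Qed.

Lemma straddle_oo ell x x' r : x < x' <= ell -> r <= ell ->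
  x <= straddle (oword ell x) 0 (oword ell x') r < x'.
Proof. by move=> hx hr; rewrite /straddle sumn_drop_oword ?sumn_take_oword; lia. Qed.

Lemma straddle_ou ell x r : x <= ell ->
  x <= straddle (oword ell x) 1 (uword ell ell) r.
Proof. by move=> hx; rewrite /straddle sumn_drop_oword ?sumn_take_uword; lia. Qed.

Lemma straddle_uu ell x x' r : x' < x -> 0 < r ->
  x' < straddle (uword ell x) 1 (uword ell x') r <= x.
Proof. by move=> hx hr; rewrite /straddle sumn_drop_uword sumn_take_uword; lia. Qed.

Lemma straddle_uo ell x r : straddle (uword ell x) 0 (oword ell 0) r <= x.
Proof. by rewrite /straddle sumn_drop_uword sumn_take_oword // subn0; lia. Qed.

Section Thresholds.
Variables (s : nat) (eta : nat -> nat).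
Hypothesis eta_incr : forall k, 1 <= k -> k < s -> eta k < eta k.+1.

Lemma eta_ltn a b : 1 <= a -> a < b -> b <= s -> eta a < eta b.
Proof.
move=> ha hab hb.
apply: (@homo_ltn_in _ [pred k | 1 <= k <= s] eta (fun x y => x < y));
  rewrite ?inE ?ha ?hb ?(leq_trans (ltnW hab) hb) ?(ltn_trans ha hab) //.
- exact: ltn_trans.
- move=> i j; rewrite !inE => /andP[hi _] /andP[_ hj] k /andP[hik hkj].
  by apply/andP; lia.
- by move=> k; rewrite !inE => /andP[hk _] /andP[_ hks]; apply: eta_incr.
Qed.

Lemma eta_leq a b : 1 <= a -> a <= b -> b <= s -> eta a <= eta b.
Proof.
by move=> ha; rewrite leq_eqVlt => /predU1P[-> | hab] // hb; rewrite ltnW ?eta_ltn.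
Qed.

Lemma sqgt_band y q : q <= s ->
  (0 < q -> eta q <= y) -> (q < s -> y < eta q.+1) -> sqgt s eta y = q.
Proof.
move=> hq hlo hhi; rewrite /sqgt -(subnKC hq) iotaD count_cat.
rewrite (@eq_in_count _ _ predT) => [|k]; last first.
  by rewrite mem_iota => hk; apply: leq_trans (hlo _); [apply: eta_leq|]; lia.
rewrite (@eq_in_count _ _ pred0 (iota (1 + q) _)) => [|k]; last first.
  rewrite mem_iota => hk /=; apply/negbTE; rewrite -ltnNge.
  by apply: leq_trans (hhi _) _; [|apply: eta_leq]; lia.
by rewrite count_predT count_pred0 size_iota addn0.
Qed.

End Thresholds.

Definition blockweight (ell s : nat) (eta : nat -> nat) (J : nat) : nat :=
  if J == 0 then 0 else if J <= s then eta J
  else if J == s.+1 then ell else eta (2 * s + 2 - J) - 1.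

Definition blockword (ell s : nat) (eta : nat -> nat) (J : nat) : seq nat :=
  if J <= s then oword ell (blockweight ell s eta J)
  else uword ell (blockweight ell s eta J).

Definition blocksep (s J : nat) : nat := (s <= J) && (J <= 2 * s).

Definition block (ell c s : nat) (eta : nat -> nat) (J : nat) : seq nat :=
  wpow c (blockword ell s eta J) ++ [:: blocksep s J].

Definition nextblock (s J : nat) : nat := if J == 2 * s + 1 then 0 else J.+1.

Lemma blockword_low ell s eta J :
  J <= s -> blockword ell s eta J = oword ell (blockweight ell s eta J).
Proof. by move=> hJ; rewrite /blockword hJ. Qed.

Lemma blockword_high ell s eta J :
  s < J -> blockword ell s eta J = uword ell (blockweight ell s eta J).
Proof. by move=> hJ; rewrite /blockword leqNgt hJ. Qed.

Lemma blockweight0 ell s eta : blockweight ell s eta 0 = 0.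
Proof. by []. Qed.

Lemma blockweight_eta ell s eta J : 1 <= J <= s -> blockweight ell s eta J = eta J.
Proof. by move=> /andP[hJ1 hJs]; rewrite /blockweight hJs (negbTE (lt0n_neq0 hJ1)). Qed.

Lemma blockweight_top ell s eta : blockweight ell s eta s.+1 = ell.
Proof. by rewrite /blockweight ltnn eqxx. Qed.

Lemma blockweight_desc ell s eta J :
  s.+1 < J -> blockweight ell s eta J = eta (2 * s + 2 - J) - 1.
Proof.
move=> hJ; rewrite /blockweight leqNgt ltnW //= (gtn_eqF hJ).
by have -> : J == 0 = false by lia.
Qed.

Lemma blocksep_low s J : J < s -> blocksep s J = 0.
Proof. by move=> hJ; rewrite /blocksep leqNgt hJ. Qed.

Lemma blocksep_mid s J : s <= J <= 2 * s -> blocksep s J = 1.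
Proof. by rewrite /blocksep => ->. Qed.

Lemma blocksep_last s : blocksep s (2 * s + 1) = 0.
Proof. by rewrite /blocksep (_ : 2 * s + 1 <= 2 * s = false) ?andbF //; lia. Qed.

Lemma nextblockS s J : J < 2 * s + 1 -> nextblock s J = J.+1.
Proof. by move=> hJ; rewrite /nextblock ltn_eqF. Qed.

Lemma nextblock_last s : nextblock s (2 * s + 1) = 0.
Proof. by rewrite /nextblock eqxx. Qed.

Lemma qseq_low s J : J <= s -> qseq s J = J.
Proof. by rewrite /qseq => ->. Qed.

Lemma qseq_high s J : s < J -> qseq s J = 2 * s + 1 - J.
Proof. by move=> hJ; rewrite /qseq leqNgt hJ. Qed.

Lemma flatten_shift (C : nat -> seq nat) (S : nat -> nat) (T : seq nat) n a :
  C a ++ flatten [seq S k.-1 :: C k | k <- iota a.+1 n] ++ S (a + n) :: T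
  = flatten [seq C k ++ [:: S k] | k <- iota a n.+1] ++ T.
Proof.
elim: n a => [|n IH] a; first by rewrite addn0 /= cats0 -catA.
rewrite -addSnnS; transitivity (C a ++ S a :: (C a.+1
  ++ flatten [seq S k.-1 :: C k | k <- iota a.+2 n] ++ S (a.+1 + n) :: T)).
  by rewrite /= -!catA.
by rewrite IH /= -!catA.
Qed.

Lemma rev_iota_reflect m n b :
  rev (iota m n) = [seq m + n + b - j | j <- iota b.+1 n].
Proof.
elim: n b => [|n IH] b //.
rewrite -addn1 iotaD rev_cat (IH b.+1) addn1 /=; congr (_ :: _); first by lia.
by apply: eq_map => j; lia.
Qed.

Lemma pword_blocks ell c s eta :
  pword ell c s eta = flatten [seq block ell c s eta J | J <- iota 0 (2 * s + 2)].
Proof.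
set C := fun J => wpow c (blockword ell s eta J).
have e1 : [seq 0 :: wpow c (oword ell (eta k)) | k <- iota 1 s]
        = [seq blocksep s k.-1 :: C k | k <- iota 1 s].
  apply/eq_in_map => k; rewrite mem_iota => hk.
  rewrite /blocksep /C /blockword /blockweight.
  have -> : s <= k.-1 = false by lia.
  have -> : k <= s by lia.
  by have -> : k == 0 = false by lia.
have e2 : [seq 1 :: wpow c (uword ell (eta k - 1)) | k <- rev (iota 1 s)]
        = [seq blocksep s k.-1 :: C k | k <- iota s.+2 s].
  rewrite (rev_iota_reflect 1 s s.+1) -map_comp.
  apply/eq_in_map => k; rewrite mem_iota => hk /=.
  rewrite /blocksep /C /blockword /blockweight.
  have -> : 1 + s + s.+1 - k = 2 * s + 2 - k by lia.
  have -> : s <= k.-1 <= 2 * s by lia.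
  have -> : k <= s = false by lia.
  have -> : k == 0 = false by lia.
  by have -> : k == s.+1 = false by lia.
have e3 : 1 :: wpow c (uword ell ell) = blocksep s s :: C s.+1.
  by rewrite /C blockword_high // blockweight_top blocksep_mid // leqnn leq_pmull.
have e4 : blocksep s (0 + (2 * s + 1)) = 0 by rewrite add0n blocksep_last.
have e5 : iota 1 (2 * s + 1) = iota 1 s ++ s.+1 :: iota s.+2 s.
  by rewrite (_ : 2 * s + 1 = s + (1 + s)) ?iotaD ?add1n ?addn1 //; lia.
rewrite (_ : 2 * s + 2 = (2 * s + 1).+1); last by lia.
rewrite -[RHS]cats0 -(flatten_shift C (blocksep s)) e4 e5 /pword e1 e2 e3.
by rewrite map_cat flatten_cat map_cons -!catA.
Qed.

Section BlockBands.
Variables (ell s : nat) (eta : nat -> nat).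
Hypotheses (hs : 1 <= s) (heta1 : 1 <= eta 1)
  (hinc : forall k, 1 <= k -> k < s -> eta k < eta k.+1)
  (hetas : eta s <= ell).

Lemma eta_range k : 1 <= k <= s -> 1 <= eta k <= ell.
Proof.
move=> /andP[hk1 hks]; apply/andP; split.
- by apply: leq_trans heta1 (eta_leq hinc _ _ _).
- by apply: leq_trans (eta_leq hinc _ _ _) hetas.
Qed.

Lemma blockweight_le J : J < 2 * s + 2 -> blockweight ell s eta J <= ell.
Proof.
move=> hJ; rewrite /blockweight.
case: eqP => // hJ0; case: ifP => hJs.
  have hJ1 : 1 <= J <= s by lia.
  by case/andP: (eta_range hJ1).
case: eqP => // hJs1.
have hJ1 : 1 <= 2 * s + 2 - J <= s by lia.
by case/andP: (eta_range hJ1); lia.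
Qed.

Lemma size_blockword J : J < 2 * s + 2 -> size (blockword ell s eta J) = ell.
Proof.
move=> hJ; rewrite /blockword.
by case: ifP; rewrite ?size_oword ?size_uword ?blockweight_le.
Qed.

Lemma band_full J : J < 2 * s + 2 ->
  sqgt s eta (sumn (blockword ell s eta J)) = qseq s J.
Proof.
move=> hJ; have : J = 0 \/ 1 <= J <= s \/ J = s.+1 \/ s.+1 < J by lia.
case=> [-> | [hJs | [-> | hJs]]].
- rewrite qseq_low // blockword_low // blockweight0 sumn_oword //.
  by apply: (sqgt_band hinc); lia.
- have he := eta_range hJs.
  rewrite qseq_low; last by lia.
  rewrite blockword_low; last by lia.
  rewrite blockweight_eta // sumn_oword; last by lia.
  by apply: (sqgt_band hinc) => [|//|hJs']; [lia | apply: hinc; lia].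
- have e1 : 2 * s + 1 - s.+1 = s by lia.
  rewrite qseq_high // e1 blockword_high // blockweight_top sumn_uword.
  by apply: (sqgt_band hinc); lia.
- have [k hk hJk] : exists2 k, 1 <= k.+1 <= s & 2 * s + 2 - J = k.+1.
    by exists (2 * s + 1 - J); lia.
  have e1 : 2 * s + 1 - J = k by lia.
  rewrite qseq_high; last by lia.
  rewrite blockword_high; last by lia.
  rewrite blockweight_desc // hJk e1 sumn_uword.
  have he := eta_range hk; have hmono := @eta_ltn _ _ hinc k k.+1.
  by apply: (sqgt_band hinc); lia.
Qed.

Lemma band_straddle_low J r : J <= s -> 0 < r <= ell ->
  sqgt s eta (straddle (blockword ell s eta J) (blocksep s J)
                       (blockword ell s eta (nextblock s J)) r) = qseq s J.
Proof.
move=> hJ /andP[hr0 hrl].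
have : J = 0 \/ 1 <= J < s \/ J = s by lia.
case=> [-> | [hJs | ->]].
- have h1 : 1 <= 1 <= s by lia.
  rewrite qseq_low // nextblockS; last by lia.
  rewrite !blockword_low // blockweight0 blockweight_eta // blocksep_low //.
  have hy := straddle_oo (x := 0) (eta_range h1) hrl.
  by apply: (sqgt_band hinc); lia.
- have hJ1 : 1 <= J <= s by lia.
  have hJ2 : 1 <= J.+1 <= s by lia.
  rewrite qseq_low ?nextblockS; [|lia|lia].
  rewrite !blockword_low; [|lia|lia].
  rewrite !blockweight_eta // blocksep_low; last by lia.
  have hx : eta J < eta J.+1 <= ell by have := eta_range hJ2; have := hinc (k := J); lia.
  have hy := straddle_oo hx hrl.
  by apply: (sqgt_band hinc); lia.
- rewrite qseq_low // nextblockS; last by lia.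
  rewrite (@blockword_low ell s eta s) // (@blockword_high ell s eta s.+1) //.
  rewrite blockweight_eta ?blockweight_top ?blocksep_mid; [|lia|lia].
  have hy := straddle_ou r hetas.
  by apply: (sqgt_band hinc); lia.
Qed.

Lemma band_straddle_high J r : s < J < 2 * s + 2 -> 0 < r ->
  sqgt s eta (straddle (blockword ell s eta J) (blocksep s J)
                       (blockword ell s eta (nextblock s J)) r) = qseq s J.
Proof.
move=> hJ hr0.
have : J = s.+1 \/ s.+1 < J <= 2 * s \/ J = 2 * s + 1 by lia.
case=> [-> | [hJs | ->]].
- have hs1 : 1 <= s <= s by lia.
  have e1 : 2 * s + 1 - s.+1 = s by lia.
  have e2 : 2 * s + 2 - s.+2 = s by lia.
  rewrite qseq_high // e1 nextblockS; last by lia.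
  rewrite !blockword_high // blockweight_top blockweight_desc // e2 blocksep_mid; last by lia.
  have hx : eta s - 1 < ell by have := eta_range hs1; lia.
  have hy := @straddle_uu ell ell (eta s - 1) r hx hr0.
  by apply: (sqgt_band hinc); lia.
- have [k hk hJk] : exists2 k, 1 <= k < s & 2 * s + 1 - J = k.
    by exists (2 * s + 1 - J); lia.
  have hk1 : 1 <= k <= s by lia.
  have hk2 : 1 <= k.+1 <= s by lia.
  have e1 : 2 * s + 2 - J = k.+1 by lia.
  have e2 : 2 * s + 2 - J.+1 = k by lia.
  rewrite qseq_high; last by lia.
  rewrite nextblockS; last by lia.
  rewrite !blockword_high; [|lia|lia].
  rewrite !blockweight_desc; [|lia|lia].
  rewrite e1 e2 hJk blocksep_mid; last by lia.
  have he1 := eta_range hk1; have hmono := hinc (k := k).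
  have hx : eta k - 1 < eta k.+1 - 1 by lia.
  have hy := @straddle_uu ell (eta k.+1 - 1) (eta k - 1) r hx hr0.
  by apply: (sqgt_band hinc); lia.
- have h1 : 1 <= 1 <= s by lia.
  have e1 : 2 * s + 2 - (2 * s + 1) = 1 by lia.
  rewrite qseq_high; last by lia.
  rewrite nextblock_last (@blockword_high ell s eta (2 * s + 1)); last by lia.
  rewrite (@blockword_low ell s eta 0) // blockweight_desc; last by lia.
  rewrite e1 subnn blockweight0 blocksep_last.
  have hy := @straddle_uo ell (eta 1 - 1) r; have he := eta_range h1.
  by apply: (sqgt_band hinc); lia.
Qed.

Lemma band_straddle J r : J < 2 * s + 2 -> 0 < r <= ell ->
  sqgt s eta (straddle (blockword ell s eta J) (blocksep s J)
                       (blockword ell s eta (nextblock s J)) r) = qseq s J.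
Proof.
move=> hJ hr; case: (leqP J s) => hJs; first exact: band_straddle_low.
by apply: band_straddle_high; [apply/andP | case/andP: hr].
Qed.

End BlockBands.

Section PeriodicWindows.
Variables (ell c s : nat) (eta : nat -> nat).
Hypotheses (hell : 1 <= ell) (hc : 1 <= c) (hs : 1 <= s) (heta1 : 1 <= eta 1)
  (hinc : forall k, 1 <= k -> k < s -> eta k < eta k.+1)
  (hetas : eta s <= ell).

Lemma size_block J : J < 2 * s + 2 -> size (block ell c s eta J) = c * ell + 1.
Proof. by move=> hJ; rewrite /block size_cat size_wpow size_blockword. Qed.

Lemma size_pword : size (pword ell c s eta) = (2 * s + 2) * (c * ell + 1).
Proof.
by rewrite pword_blocks (size_flatten_blocks (m := c * ell + 1)) // => k /size_block.
Qed.

Lemma drop_pword_block J : J < 2 * s + 2 ->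
  exists Z, drop (J * (c * ell + 1)) (pword ell c s eta ++ pword ell c s eta)
            = block ell c s eta J ++ block ell c s eta (nextblock s J) ++ Z.
Proof.
move=> hJ.
have hB k : 0 <= k < 0 + (2 * s + 2) -> size (block ell c s eta k) = c * ell + 1.
  by move=> /andP[_]; apply: size_block.
rewrite {1}pword_blocks (drop_flatten_blocks _ hB (ltnW hJ)) add0n /nextblock.
case: eqP => [-> | hJe].
- rewrite (_ : 2 * s + 2 - (2 * s + 1) = 1) ?pword_blocks; last by lia.
  rewrite (_ : 2 * s + 2 = (2 * s + 1).+1); last by lia.
  exists (flatten [seq block ell c s eta k | k <- iota 1 (2 * s + 1)]).
  by rewrite /= cats0.
- rewrite (_ : 2 * s + 2 - J = (2 * s - J).+2); last by lia.
  exists (flatten [seq block ell c s eta k | k <- iota J.+2 (2 * s - J)]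
          ++ pword ell c s eta).
  by rewrite /= -!catA.
Qed.

Lemma window_pword i (J := i %/ (c * ell + 1) %% (2 * s + 2))
    (r := i %% (c * ell + 1)) :
  \sum_(i <= t < i + ell) vseq ell c s eta t
  = if r + ell <= c * ell then sumn (blockword ell s eta J)
    else straddle (blockword ell s eta J) (blocksep s J)
                  (blockword ell s eta (nextblock s J)) (r + ell - c * ell).
Proof.
have hJ : J < 2 * s + 2 by rewrite ltn_mod; lia.
have hr : r < c * ell + 1 by rewrite ltn_mod addn1.
have hlc : ell <= c * ell := leq_pmull ell hc.
have hnext : nextblock s J < 2 * s + 2 by rewrite /nextblock; case: eqP; lia.
have [hP0 hPl] : 0 < size (pword ell c s eta) /\ ell <= size (pword ell c s eta).
  by rewrite size_pword; split; nia.
rewrite /vseq sum_periodic_window // size_pword modn_mul_split -/J -/r.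
rewrite addnC -drop_drop.
have [Z ->] := drop_pword_block hJ.
rewrite /block -!catA /=.
case: ifP => hwin; first by rewrite sumn_window_wpow ?size_blockword.
by rewrite sumn_window_straddle ?size_blockword //; lia.
Qed.

End PeriodicWindows.

Theorem mainTheorem1 (ell c s : nat) (eta : nat -> nat)
  (hell : 1 <= ell) (hc : 1 <= c) (hs : 1 <= s)
  (heta1 : 1 <= eta 1)
  (hinc : forall k, 1 <= k -> k < s -> eta k < eta k.+1)
  (hetas : eta s <= ell) :
  forall i : nat,
    sqgt s eta (\sum_(i <= t < i + ell) vseq ell c s eta t)
    = qseq s ((i %/ (c * ell + 1)) %% (2 * s + 2)).
Proof.
move=> i; rewrite window_pword //.
have hJ : i %/ (c * ell + 1) %% (2 * s + 2) < 2 * s + 2 by rewrite ltn_mod; lia.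
have hr : i %% (c * ell + 1) < c * ell + 1 by rewrite ltn_mod addn1.
case: ifP => hwin; first exact: band_full.
by apply: band_straddle => //; lia.
Qed.
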